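(* Let $B>1$, $0<\delta<\frac{1}{1+B}$ and $T>0$. For every $t\ge\delta^{-1}T$ there is a finite sequence $s_1,\dots,s_N$ of reals such that $t=s_1+\cdots+s_N$, $s_1=Bs_2$, $s_i=(1+\delta)s_{i+1}$ for $2\le i\le N-1$, and $T\le s_N\le2T$. *)

From Stdlib Require Export Reals.
Open Scope R_scope.

Definition sum_1_to (s : nat -> R) (N : nat) : R :=
  match N with
  | O => 0
  | S n => sum_f_R0 (fun i => s (S i)) n
  end.

(** Read backwards, the sequence is [x, q x, ..., q^k x, B q^k x] with
    [q = 1 + delta], so it is determined by its last term [x] and its length
    [k + 2], and its sum is [x * w k] with [w k = B q^k + q^k + ... + 1].
    The weights satisfy [w 0 = 1 + B] and [w (k+1) = q w k + 1]; they are
    unbounded and, since [delta (1 + B) < 1], at most double at each step.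
    Choosing [k] with [T w k <= t < T w (k+1)] and [x = t / w k] gives
    [T <= x < 2 T]; such a [k] exists because [t >= T / delta > T w 0]. *)

From Stdlib Require Import Reals Lra Lia.
Open Scope R_scope.

Lemma exists_bracketing_index (f : nat -> R) (y : R) :
  f O <= y -> (exists n, y < f n) -> exists k, f k <= y < f (S k).
Proof.
  intros h0 [n hn].
  induction n as [|n IH]; [lra|].
  destruct (Rle_lt_dec (f n) y) as [hle|hlt].
  - now exists n.
  - exact (IH hlt).
Qed.

Lemma quotient_in_bracket (T t w w' : R) :
  0 < T -> 0 < w -> w' <= 2 * w -> T * w <= t < T * w' -> T <= t / w <= 2 * T.
Proof.
  intros hT hw hw' [hlo hhi].
  assert (T * w' <= T * (2 * w)) by (apply Rmult_le_compat_l; lra).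
  replace t with (t / w * w) in hlo, hhi by (field; lra).
  split; apply (Rmult_le_reg_r w); lra.
Qed.

Section Chain.

Variables B q : R.

Definition chain_weight (k : nat) : R :=
  B * q ^ k + sum_f_R0 (fun i => q ^ (k - i)) k.

Definition chain (x : R) (k i : nat) : R :=
  if Nat.eqb i 1 then B * q ^ k * x else q ^ (S (S k) - i) * x.

Lemma sum_chain (x : R) (k : nat) :
  sum_1_to (chain x k) (S (S k)) = x * chain_weight k.
Proof.
  unfold sum_1_to, chain_weight.
  rewrite decomp_sum by lia; simpl pred.
  rewrite (sum_eq _ (fun i => q ^ (k - i) * x)) by (intros i _; reflexivity).
  rewrite <- scal_sum; unfold chain; simpl Nat.eqb; cbv iota; ring.
Qed.

Lemma chain_head (x : R) (k : nat) : chain x k 1 = B * chain x k 2.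
Proof.
  unfold chain; simpl Nat.eqb; cbv iota.
  replace (S (S k) - 2)%nat with k by lia; ring.
Qed.

Lemma chain_ratio (x : R) (k i : nat) :
  (2 <= i)%nat -> (i <= S k)%nat -> chain x k i = q * chain x k (S i).
Proof.
  intros h2 hk; unfold chain.
  destruct (Nat.eqb_spec i 1) as [e|_]; [lia|].
  destruct (Nat.eqb_spec (S i) 1) as [e|_]; [lia|].
  replace (S (S k) - i)%nat with (S (S (S k) - S i)) by lia; simpl; ring.
Qed.

Lemma chain_last (x : R) (k : nat) : chain x k (S (S k)) = x.
Proof. unfold chain; simpl Nat.eqb; rewrite Nat.sub_diag; simpl; ring. Qed.

Lemma chain_weight_O : chain_weight O = 1 + B.
Proof. unfold chain_weight; simpl; ring. Qed.

Lemma chain_weight_S (k : nat) : chain_weight (S k) = q * chain_weight k + 1.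
Proof.
  unfold chain_weight; simpl sum_f_R0 at 1.
  rewrite Nat.sub_diag, Rmult_plus_distr_l, scal_sum.
  rewrite (sum_eq (fun i => q ^ (S k - i)) (fun i => q ^ (k - i) * q)).
  - simpl; ring.
  - intros i hi; rewrite Nat.sub_succ_l by lia; simpl; ring.
Qed.

Hypotheses (hB : 0 <= B) (hq : 1 <= q).

Lemma chain_weight_ge (k : nat) : 1 + B + INR k <= chain_weight k.
Proof.
  induction k as [|k IH].
  - rewrite chain_weight_O; simpl; lra.
  - rewrite chain_weight_S, S_INR.
    pose proof (pos_INR k).
    nra.
Qed.

Lemma chain_weight_pos (k : nat) : 0 < chain_weight k.
Proof. pose proof (chain_weight_ge k); pose proof (pos_INR k); lra. Qed.

Lemma chain_weight_unbounded (y : R) : exists n, y < chain_weight n.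
Proof.
  destruct (INR_unbounded y) as [n hn].
  exists n; pose proof (chain_weight_ge n); lra.
Qed.

Lemma chain_weight_S_le_double (k : nat) :
  1 <= (2 - q) * (1 + B) -> chain_weight (S k) <= 2 * chain_weight k.
Proof.
  intros hqB.
  rewrite chain_weight_S.
  pose proof (chain_weight_ge k); pose proof (pos_INR k).
  nra.
Qed.

End Chain.

Theorem lemma6p2 (B delta T : R) (hB : 1 < B) (hd0 : 0 < delta)
  (hd1 : delta < 1 / (1 + B)) (hT : 0 < T) (t : R) (ht : T / delta <= t) :
  exists (N : nat) (s : nat -> R),
    (2 <= N)%nat /\
    t = sum_1_to s N /\
    s 1%nat = B * s 2%nat /\
    (forall i : nat, (2 <= i)%nat -> (i <= N - 1)%nat -> s i = (1 + delta) * s (S i)) /\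
    T <= s N /\ s N <= 2 * T.
Proof.
  set (q := 1 + delta).
  assert (hB0 : 0 <= B) by lra; assert (hq : 1 <= q) by (unfold q; lra).
  assert (hdB : delta * (1 + B) < 1).
  { replace 1 with (1 / (1 + B) * (1 + B)) at 2 by (field; lra).
    apply Rmult_lt_compat_r; lra. }
  assert (htd : T <= t * delta).
  { replace T with (T / delta * delta) at 1 by (field; lra).
    apply Rmult_le_compat_r; lra. }
  destruct (exists_bracketing_index (fun k => T * chain_weight B q k) t) as [k hk].
  - rewrite chain_weight_O; nra.
  - destruct (chain_weight_unbounded B q hB0 hq (t / T)) as [n hn].
    exists n; replace t with (T * (t / T)) by (field; lra).
    apply Rmult_lt_compat_l; lra.
  - pose proof (chain_weight_pos B q hB0 hq k) as hw.
    assert (hdouble : chain_weight B q (S k) <= 2 * chain_weight B q k).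
    { apply (chain_weight_S_le_double B q hB0 hq).
      replace ((2 - q) * (1 + B)) with (1 + B - delta * (1 + B)) by (unfold q; ring).
      lra. }
    set (x := t / chain_weight B q k).
    exists (S (S k)), (chain B q x k).
    split; [lia|].
    split; [rewrite sum_chain; unfold x; field; lra|].
    split; [apply chain_head|].
    split; [intros i h2 hN; apply chain_ratio; lia|].
    rewrite chain_last; exact (quotient_in_bracket _ _ _ _ hT hw hdouble hk).
Qed.
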